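(* Let $X$ be an HLC space, $R$ a commutative noetherian ring and $\mathcal{A}$ a sheaf of $R$-modules on $X$. Then the sequence $$0\to\mathcal{A}\to\mathcal{S}^0_{\mathrm{fg}}(X;\mathcal{A})\to\mathcal{S}^1_{\mathrm{fg}}(X;\mathcal{A})\to\mathcal{S}^2_{\mathrm{fg}}(X;\mathcal{A})\to\cdots$$ is exact.
   Context: $\mathcal{S}^n(X;\mathcal{A})$ is the sheaf of germs of $U\mapsto S^n(U;\mathcal{A}(U))$ (functions from singular $n$-simplices of $U$ to $\mathcal{A}(U)$, restriction via restricting simplices and $\mathcal{A}(U)\to\mathcal{A}(V)$), with singular coboundary; $\mathcal{S}^n_{\mathrm{fg}}(X;\mathcal{A})=\mathcal{S}^n(X;\mathcal{R})\otimes_R\mathcal{A}$ ($\mathcal{R}=R\times X$), identified with the subsheaf of germs of cochains whose values lie in a finitely generated submodule of $\mathcal{A}(U)$. The first map sends the germ of a section $s\in\mathcal{A}(U)$ to the germ of the constant $0$-cochain $u\mapsto s$. HLC: for every $x$, neighbourhood $U$ of $x$ and $n\ge0$ there is a neighbourhood $V\subseteq U$ of $x$ with $\tilde H_n(V;\mathbb{Z})\to\tilde H_n(U;\mathbb{Z})$ zero. *)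

From HB Require Import structures.
From mathcomp Require Import all_boot all_order all_algebra.
From mathcomp Require Import all_classical all_reals all_analysis.
From mathcomp Require Import Rstruct Rstruct_topology.

Set Implicit Arguments.
Unset Strict Implicit.
Unset Printing Implicit Defensive.

Import Order.TTheory GRing.Theory Num.Theory.
Local Open Scope classical_set_scope.
Local Open Scope ring_scope.

Notation RR := Rdefinitions.R.

Definition stdsimplex (n : nat) : set 'rV[RR]_n.+1 :=
  [set t | (forall j, 0 <= t 0 j) /\ \sum_(j < n.+1) t 0 j = 1].

Arguments stdsimplex n : clear implicits.

(* Delta^n as a topological space: subspace topology (initial topology of the
   inclusion) on the subtype. *)
Definition Delta (n : nat) := set_type (stdsimplex n).

(* i-th face row map R^{n+1} -> R^{n+2}: insert a 0 at coordinate i. *)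
Definition face_row (n : nat) (i : 'I_n.+2) (t : 'rV[RR]_n.+1) : 'rV[RR]_n.+2 :=
  \row_j (if unlift i j is Some k then t 0 k else 0).

Lemma face_row_simplex n (i : 'I_n.+2) t :
  stdsimplex n t -> stdsimplex n.+1 (face_row i t).
Proof.
move=> [t0 t1]; split.
  by move=> j; rewrite mxE; case: unlift.
rewrite (bigD1_ord i) //= mxE unlift_none add0r -t1.
by apply: eq_bigr => k _; rewrite mxE liftK.
Qed.

Definition face (n : nat) (i : 'I_n.+2) (t : Delta n) : Delta n.+1 :=
  exist _ (face_row i (set_val t))
    (mem_set (face_row_simplex i (set_mem (valP t)))).

Section Singular.
Variable X : topologicalType.

Definition singular (n : nat) (U : set X) (sigma : Delta n -> X) : Prop :=
  continuous sigma /\ (forall t, U (sigma t)).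

(* integral singular n-chains, as finite formal sums sum_k a_k sigma_k *)
Definition chain (n : nat) := seq (int * (Delta n -> X)).

Definition chain_in (n : nat) (U : set X) (c : chain n) : Prop :=
  List.Forall (fun p => singular U p.2) c.

Definition coef (n : nat) (c : chain n) (tau : Delta n -> X) : int :=
  \sum_(p <- c) (if `[< p.2 = tau >] then p.1 else 0).

(* equality of chains in the free abelian group on singular simplices *)
Definition chain_eq (n : nat) (c d : chain n) : Prop :=
  forall tau, coef c tau = coef d tau.

Definition bdry (n : nat) (c : chain n.+1) : chain n :=
  flatten [seq [seq (((-1) ^+ i * p.1)%R, p.2 \o @face n i) | i : 'I_n.+2 <- enum 'I_n.+2]
          | p : int * (Delta n.+1 -> X) <- c].

Definition augment (c : chain 0) : int := \sum_(p <- c) p.1.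

Definition reduced_cycle (n : nat) : chain n -> Prop :=
  match n as k return chain k -> Prop with
  | 0 => fun c => augment c = 0
  | m.+1 => fun c => chain_eq (bdry c) [::]
  end.

(* HLC: for every x, neighbourhood U of x and n >= 0 there is a neighbourhood
   V of x inside U such that  H~_n(V;Z) -> H~_n(U;Z)  is zero, i.e. every
   reduced n-cycle of V is a boundary in U. *)
Definition HLC : Prop :=
  forall (x : X) (U : set X), nbhs x U -> forall n : nat,
    exists V : set X, [/\ nbhs x V, V `<=` U &
      forall z : chain n, chain_in V z -> reduced_cycle z ->
        exists w : chain n.+1, chain_in U w /\ chain_eq (bdry w) z].


Definition ideal (R : comPzRingType) (I : set R) : Prop :=
  [/\ I 0, (forall a b, I a -> I b -> I (a + b)) &
      (forall r a, I a -> I (r * a))].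

Definition noetherian (R : comPzRingType) : Prop :=
  forall I : nat -> set R, (forall n, ideal (I n)) -> (forall n, I n `<=` I n.+1) ->
    exists N, forall n, (N <= n)%N -> I n = I N.

(* The module of sections and the restriction maps are given for all subsets /
   pairs of subsets; only their values on open sets and inclusions matter and
   only those are constrained by the axioms. *)
Unset Implicit Arguments.
Record sheaf (R : comPzRingType) := Sheaf {
  sec : set X -> lmodType R;
  res : forall U V : set X, sec U -> sec V;
  res_linear : forall U V, open U -> open V -> V `<=` U -> linear (res U V);
  res_id : forall U, open U -> forall s, res U U s = s;
  res_comp : forall U V W, open U -> open V -> open W -> W `<=` V -> V `<=` U ->
    forall s, res V W (res U V s) = res U W s;
  sheaf_local : forall (U : set X) (I : Type) (V : I -> set X),
    open U -> (forall i, open (V i)) -> \bigcup_i V i = U ->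
    forall s t : sec U, (forall i, res U (V i) s = res U (V i) t) -> s = t;
  sheaf_glue : forall (U : set X) (I : Type) (V : I -> set X),
    open U -> (forall i, open (V i)) -> \bigcup_i V i = U ->
    forall f : forall i, sec (V i),
      (forall i j, res (V i) (V i `&` V j) (f i) = res (V j) (V i `&` V j) (f j)) ->
      exists s : sec U, forall i, res U (V i) s = f i
}.
Set Implicit Arguments.
Arguments sec {R} s0 U.
Arguments res {R} s0 U V _.

Section Cochains.
Variables (R : comPzRingType) (A : sheaf R).

(* an element of  S^n(U; A(U)) : a function on singular n-simplices of U with
   values in A(U) (represented by a function on all maps Delta^n -> X; only its
   values on singular n-simplices of U are relevant, see below). *)
Definition cochain (n : nat) (U : set X) := (Delta n -> X) -> sec A U.

Definition cobdry (n : nat) (U : set X) (c : cochain n U) : cochain n.+1 U :=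
  fun sigma => \sum_(i < n.+2) ((-1) ^+ i : R) *: c (sigma \o face i).

Definition span (M : lmodType R) (s : seq M) : set M :=
  [set v | exists r : 'I_(size s) -> R, v = \sum_(i < size s) r i *: nth 0 s i].

Definition fg_cochain (n : nat) (U : set X) (c : cochain n U) : Prop :=
  exists s : seq (sec A U), forall sigma, @singular n U sigma -> span s (c sigma).

Definition germ_zero (n : nat) (U : set X) (x : X) (c : cochain n U) : Prop :=
  exists V : set X, [/\ open V, V x, V `<=` U &
    forall sigma, @singular n V sigma -> res A U V (c sigma) = 0].

End Cochains.
End Singular.
Arguments singular {X} n U sigma.
Arguments sec {X R} s0 U.
Arguments res {X R} s0 U V _.
Arguments cochain {X R} A n U.
Arguments cobdry {X R A n U} c _.
Arguments fg_cochain {X R A n U} c.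
Arguments germ_zero {X R} A {n} U x c.
Arguments HLC X : clear implicits.
Arguments noetherian R : clear implicits.

From Pilot Require Import Defs.
From HB Require Import structures.
From mathcomp Require Import all_boot all_order all_algebra.
From mathcomp Require Import all_classical all_reals all_analysis.
From mathcomp Require Import Rstruct Rstruct_topology.
From mathcomp Require Import zify.
Import Order.TTheory GRing.Theory Num.Theory.
Local Open Scope classical_set_scope.
Local Open Scope ring_scope.

Set Implicit Arguments.
Unset Strict Implicit.
Unset Printing Implicit Defensive.

(* HLC lets one bound, inside a prescribed neighbourhood of x, every reduced
   cycle of a smaller neighbourhood.  Doing this degree by degree yields, for
   any neighbourhood V of x, a smaller neighbourhood W and chain operators E_k
   sending singular k-simplices of W to (k+1)-chains of V with
   dE_0 s = s - [x]  and  dE_(k+1) s = s - E_k (ds).  Dually every cochain f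
   satisfies  f = E^*(df) + d(E^* f)  on W  (f = E^*(df) + f([x]) in degree 0),
   so a cochain whose coboundary vanishes near x is, near x, constant in
   degree 0 and the coboundary of E^* f in higher degrees.  The values of
   E^* f are integral combinations of values of f, so E^* f is finitely
   generated whenever f is. *)

(** * Face maps *)

(* [face_row] on nat-indexed coordinates, where the simplicial identity is
   plain arithmetic. *)
Definition insert_zero (i : nat) (u : nat -> RR) (j : nat) : RR :=
  if (j < i)%N then u j else if j == i then 0 else u j.-1.

Lemma face_rowE n (i : 'I_n.+2) (t : 'rV[RR]_n.+1) (j : 'I_n.+2) :
  face_row i t 0 j = insert_zero i (fun l => t 0 (inord l)) j.
Proof.
rewrite /face_row mxE /insert_zero; case: unliftP => [k ->|->].
  rewrite /= /bump; case: (leqP i k) => hik /=; last by rewrite add0n hik inord_val.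
  have -> : (k.+1 < i)%N = false by lia.
  have -> : (k.+1 == i) = false by apply/eqP; lia.
  by rewrite inord_val.
by rewrite ltnn eqxx.
Qed.

Lemma eq_insert_zero i u u' j N : (i <= N)%N -> (j <= N)%N ->
  (forall m, (m < N)%N -> u m = u' m) -> insert_zero i u j = insert_zero i u' j.
Proof.
move=> hi hj h; rewrite /insert_zero; case: ifP => hji; first by apply: h; lia.
by case: ifP => // /eqP hne; apply: h; lia.
Qed.

Lemma insert_zeroC (i j : nat) u l : (j < i)%N ->
  insert_zero i (insert_zero j u) l = insert_zero j (insert_zero i.-1 u) l.
Proof.
move=> ji; rewrite /insert_zero.
by do ![case: ifPn => ?]; try done; first [exfalso; lia | congr u; lia].
Qed.

Lemma face_face n (i : 'I_n.+3) (j : 'I_n.+2) (t : Delta n) : (j < i)%N ->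
  face i (face j t) = face (inord j) (face (inord i.-1) t).
Proof.
move=> ji; apply: val_inj; apply/rowP => l /=.
have face_face_rowE (a : 'I_n.+3) (b : 'I_n.+2) (u : 'rV[RR]_n.+1) :
    face_row a (face_row b u) 0 l =
    insert_zero a (insert_zero b (fun m => u 0 (inord m))) l.
  rewrite face_rowE; apply: (@eq_insert_zero _ _ _ _ n.+2); try by rewrite -ltnS.
  by move=> m hm; rewrite face_rowE inordK.
rewrite !face_face_rowE insert_zeroC // !inordK //.
  by have := ltn_ord i; lia.
by have := ltn_ord j; lia.
Qed.

Lemma continuous_face_row n (i : 'I_n.+2) : continuous (face_row i).
Proof.
move=> t A [P hP sub].
exists (fun a k => P a (lift i k)).
  by move=> a k; have := hP a (lift i k); rewrite /face_row mxE liftK (ord1 a).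
move=> N hN; apply: sub => a j /=.
rewrite /face_row mxE; case: unliftP => [k ->|->].
  by have := hN a k; rewrite (ord1 a).
by have := hP a i; rewrite /face_row mxE unlift_none; apply: nbhs_singleton.
Qed.

Lemma continuous_face n (i : 'I_n.+2) : continuous (face i).
Proof.
apply: (@continuous_comp_initial _ _ _ set_val) => t.
apply: (@continuous_comp _ _ _ set_val (face_row i)); last exact: continuous_face_row.
exact: initial_continuous.
Qed.

(** * Integral singular cochains *)

Section SingularCochains.
Variable X : topologicalType.

Definition cob (M : zmodType) k (f : (Delta k -> X) -> M) : (Delta k.+1 -> X) -> M :=
  fun s => \sum_(i < k.+2) f (s \o face i) *~ (-1) ^+ i.

(* The pairs of faces [d_a d_b] with [b < a] cancel against [d_b d_(a-1)]. *)
Lemma sum_face_pairs_eq0 (M : zmodType) N (g : nat -> nat -> M) :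
  (forall a b, (b < a <= N)%N -> g a b = - g b a.-1) ->
  \sum_(a < N.+1) \sum_(b < N) g a b = 0.
Proof.
move=> hg.
under eq_bigr => a _ do rewrite (bigID (fun b : 'I_N => (b < a)%N)) /=.
rewrite big_split /=.
have upper : \sum_(a < N.+1) \sum_(b < N | ~~ (b < a)%N) g a b =
    - \sum_(b < N) \sum_(a < b.+1) g b.+1 a.
  rewrite -sumrN (eq_bigr (fun a : 'I_N.+1 =>
    \sum_(b < N) if (a <= b)%N then - g b.+1 a else 0)); last first.
    move=> a _; rewrite big_mkcond; apply: eq_bigr => b _.
    rewrite -leqNgt; case: ifP => // hab; rewrite (hg b.+1 a) ?opprK //.
    by have := ltn_ord b; lia.
  rewrite exchange_big /=; apply: eq_bigr => b _.
  rewrite -sumrN (big_ord_widen N.+1 (fun a => - g b.+1 a)); last by rewrite ltnS ltnW.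
  by rewrite [RHS]big_mkcond; apply: eq_bigr => a _; rewrite ltnS.
rewrite upper big_ord_recl /= big_pred0 ?add0r //; apply/eqP; rewrite subr_eq0; apply/eqP.
by apply: eq_bigr => a _; rewrite (big_ord_widen N (g a.+1)).
Qed.

Lemma cob_cob (M : zmodType) k (f : (Delta k -> X) -> M) (s : Delta k.+2 -> X) :
  cob (cob f) s = 0.
Proof.
pose g (a b : nat) := f (s \o face (inord a : 'I_k.+3) \o face (inord b : 'I_k.+2))
   *~ (-1) ^+ (a + b).
transitivity (\sum_(a < k.+3) \sum_(b < k.+2) g a b).
  apply: eq_bigr => a _; rewrite mulrz_suml; apply: eq_bigr => b _.
  by rewrite /g !inord_val -mulrzA exprD mulrC.
apply: sum_face_pairs_eq0 => -[//|a] b /andP[ba aN].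
rewrite /g -mulrNz addSn exprS mulN1r addnC; congr (f _ *~ _).
by apply/funext => t /=; rewrite face_face !inordK //; lia.
Qed.

Lemma cob_cst (M : zmodType) (m : M) (s : Delta 1 -> X) :
  cob (fun _ : Delta 0 -> X => m) s = 0.
Proof. by rewrite /cob !big_ord_recl big_ord0 /= addr0 mulrN1z subrr. Qed.

Lemma cobB (M : zmodType) k (f g : (Delta k -> X) -> M) s :
  cob (fun t => f t - g t) s = cob f s - cob g s.
Proof. by rewrite /cob -sumrB; apply: eq_bigr => i _; rewrite mulrzBl. Qed.

(** * Pairing chains with cochains *)

Definition ev (M : zmodType) k (f : (Delta k -> X) -> M) (d : chain X k) : M :=
  \sum_(p <- d) f p.2 *~ p.1.

Definition chain_opp k (d : chain X k) : chain X k := [seq (- p.1, p.2) | p <- d].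

(* The linear extension of [E] from simplices to chains. *)
Definition chain_bind k l (E : (Delta k -> X) -> chain X l) (d : chain X k) : chain X l :=
  flatten [seq [seq (p.1 * q.1, q.2) | q <- E p.2] | p <- d].

Lemma ev_cons (M : zmodType) k (f : (Delta k -> X) -> M) p d :
  ev f (p :: d) = f p.2 *~ p.1 + ev f d.
Proof. exact: big_cons. Qed.

Lemma ev_nil (M : zmodType) k (f : (Delta k -> X) -> M) : ev f [::] = 0.
Proof. exact: big_nil. Qed.

Lemma ev_unit (M : zmodType) k (f : (Delta k -> X) -> M) s : ev f [:: (1, s)] = f s.
Proof. by rewrite ev_cons ev_nil addr0. Qed.

Lemma ev_cat (M : zmodType) k (f : (Delta k -> X) -> M) d1 d2 :
  ev f (d1 ++ d2) = ev f d1 + ev f d2.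
Proof. exact: big_cat. Qed.

Lemma ev_opp (M : zmodType) k (f : (Delta k -> X) -> M) d :
  ev f (chain_opp d) = - ev f d.
Proof. by rewrite /ev big_map -sumrN; apply: eq_bigr => p _; rewrite mulrNz. Qed.

Lemma ev_bind (M : zmodType) k l (f : (Delta l -> X) -> M) E (d : chain X k) :
  ev f (chain_bind E d) = ev (fun s => ev f (E s)) d.
Proof.
rewrite /ev /chain_bind big_flatten big_map; apply: eq_bigr => p _.
by rewrite big_map mulrz_suml; apply: eq_bigr => q _; rewrite mulrzA_C.
Qed.

Lemma ev_bdry (M : zmodType) k (f : (Delta k -> X) -> M) d :
  ev f (bdry d) = ev (cob f) d.
Proof.
rewrite /ev /bdry big_flatten big_map; apply: eq_bigr => p _.
rewrite big_map /cob mulrz_suml big_enum; apply: eq_bigr => i _.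
by rewrite mulrzA.
Qed.

Lemma ev_indicator k (tau : Delta k -> X) d :
  ev (fun s => if `[< s = tau >] then 1 else 0) d = coef d tau.
Proof. by apply: eq_bigr => p _; case: ifP; rewrite ?mul0rz ?intz. Qed.

(* Chains are lists, not free-module elements: induct on the length, removing
   all the terms on the simplex of the head at once. *)
Lemma ev_eq0 (M : zmodType) k (f : (Delta k -> X) -> M) (e : chain X k) :
  (forall tau, coef e tau = 0) -> ev f e = 0.
Proof.
move: {2}(size e) (leqnn (size e)) => m; elim: m e => [|m IH] [|p e] //=;
  try by rewrite ev_nil.
move=> hs hc.
pose P (q : int * (Delta k -> X)) := `[< q.2 = p.2 >].
rewrite /ev (bigID P) /=.
have -> : \sum_(q <- p :: e | P q) f q.2 *~ q.1 = f p.2 *~ coef (p :: e) p.2.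
  rewrite /coef mulrz_sumr big_mkcond; apply: eq_bigr => q _.
  by rewrite /P; case: ifP => [/asboolP ->|]; rewrite ?mulr0z.
rewrite hc mulr0z add0r -big_filter; apply: IH.
  rewrite /= /P asboolT //= size_filter.
  exact: leq_trans (count_size _ _) _.
move=> tau; rewrite /coef big_filter /=.
have [->|ntau] := pselect (tau = p.2).
  by rewrite big1 // => q; rewrite /P /=; case: asboolP => // ->; rewrite asboolT.
have := hc tau; rewrite /coef (bigID P) /= [X in X + _ = _]big1 ?add0r //.
by move=> q /asboolP ->; rewrite asboolF // => /esym.
Qed.

Lemma coef_cat k (d1 d2 : chain X k) tau : coef (d1 ++ d2) tau = coef d1 tau + coef d2 tau.
Proof. exact: big_cat. Qed.

Lemma coef_opp k (d : chain X k) tau : coef (chain_opp d) tau = - coef d tau.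
Proof.
by rewrite /coef big_map -sumrN; apply: eq_bigr => p _ /=; case: ifP; rewrite ?oppr0.
Qed.

Lemma chain_eqP k (d e : chain X k) :
  chain_eq d e <-> forall (M : zmodType) (f : (Delta k -> X) -> M), ev f d = ev f e.
Proof.
split=> [hde M f|h tau]; last by rewrite -!ev_indicator h.
apply/eqP; rewrite -subr_eq0 -ev_opp -ev_cat; apply/eqP/ev_eq0 => tau.
by rewrite coef_cat coef_opp hde subrr.
Qed.

(** * Singular simplices and chains of a subspace *)

Lemma singular_sub k (U V : set X) (s : Delta k -> X) :
  U `<=` V -> singular k U s -> singular k V s.
Proof. by move=> UV [hs hU]; split => // t; apply: UV. Qed.

Lemma singular_face k (W : set X) (s : Delta k.+1 -> X) (i : 'I_k.+2) :
  singular k.+1 W s -> singular k W (s \o face i).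
Proof.
move=> [hs hW]; split=> [t|t]; last exact: hW.
by apply: continuous_comp; [exact: continuous_face | exact: hs].
Qed.

Lemma singular_cst k (W : set X) (x : X) : W x -> singular k W (fun _ => x).
Proof. by move=> Wx; split => // t; apply: cst_continuous. Qed.

Lemma chain_in_cons k (U : set X) (p : int * (Delta k -> X)) d :
  chain_in U (p :: d) <-> singular k U p.2 /\ chain_in U d.
Proof. exact: List.Forall_cons_iff. Qed.

Lemma chain_in_sub k (U V : set X) (d : chain X k) :
  U `<=` V -> chain_in U d -> chain_in V d.
Proof. by move=> UV; apply: List.Forall_impl => p; apply: singular_sub. Qed.

Lemma chain_in_cat k (U : set X) (d1 d2 : chain X k) :
  chain_in U d1 -> chain_in U d2 -> chain_in U (d1 ++ d2).
Proof. by move=> h1 h2; apply/List.Forall_app. Qed.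

Lemma chain_in_opp k (U : set X) (d : chain X k) : chain_in U d -> chain_in U (chain_opp d).
Proof. by elim: d => // p d IH /chain_in_cons [hp hd]; constructor; last apply: IH. Qed.

Lemma chain_in_bind k l (W Y : set X) (E : (Delta k -> X) -> chain X l) d :
  chain_in W d -> (forall s, singular k W s -> chain_in Y (E s)) ->
  chain_in Y (chain_bind E d).
Proof.
move=> + hE; elim: d => [|p d IH /chain_in_cons [hp hd]]; first by constructor.
apply: chain_in_cat (IH hd); have := hE _ hp.
by elim: (E p.2) => // q e IHe /chain_in_cons [hq he]; constructor; last apply: IHe.
Qed.

Lemma chain_in_bdry_unit k (W : set X) (s : Delta k.+1 -> X) :
  singular k.+1 W s -> chain_in W (bdry [:: (1, s)]).
Proof.
move=> hs; rewrite /bdry /= cats0.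
by elim: (enum 'I_k.+2) => [|i r IH] /=; constructor; last apply: IH;
  apply: singular_face.
Qed.

Lemma eq_ev_in (M : zmodType) k (V : set X) (f g : (Delta k -> X) -> M) d :
  chain_in V d -> (forall s, singular k V s -> f s = g s) -> ev f d = ev g d.
Proof.
move=> + h; elim: d => [|p d IH /chain_in_cons [hp hd]]; first by rewrite !ev_nil.
by rewrite !ev_cons h // IH.
Qed.

Lemma ev_eq0_in (M : zmodType) k (V : set X) (f : (Delta k -> X) -> M) d :
  chain_in V d -> (forall s, singular k V s -> f s = 0) -> ev f d = 0.
Proof.
move=> hd h; rewrite (eq_ev_in (g := fun _ => 0) hd h).
by rewrite /ev big1 // => p _; rewrite mul0rz.
Qed.

Lemma eq_cob_in (M : zmodType) k (W : set X) (f g : (Delta k -> X) -> M) s :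
  singular k.+1 W s -> (forall t, singular k W t -> f t = g t) -> cob f s = cob g s.
Proof.
by move=> hs h; apply: eq_bigr => i _; rewrite h //; apply: singular_face.
Qed.

(** * Local contractions *)

Section LocalContraction.
Variable x : X.
Hypothesis hlc : HLC X.

Let pt : Delta 0 -> X := fun _ => x.

(* On simplices of [W], [E] is a chain homotopy inside [Y] from the identity to
   the correction term [C], which is [pt] in degree 0 and [E_(k-1) o d] above;
   the last clause says that [C] kills boundaries. *)
Definition contraction k (W Y : set X) (E : (Delta k -> X) -> chain X k.+1)
    (C : (Delta k -> X) -> chain X k) : Prop :=
  [/\ forall s, singular k W s -> chain_in Y (E s),
      forall s, singular k W s -> chain_eq (bdry (E s)) ((1, s) :: chain_opp (C s)) &
      forall s, singular k.+1 W s -> chain_eq (chain_bind C (bdry [:: (1, s)])) [::]].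

Lemma contraction_cochain (M : zmodType) k W Y E C (f : (Delta k -> X) -> M) s :
  contraction W Y E C -> singular k W s -> f s = ev (cob f) (E s) + ev f (C s).
Proof.
move=> [_ hbdry _] hs; have /chain_eqP/(_ M f) := hbdry s hs.
by rewrite ev_bdry ev_cons ev_opp mulr1z => ->; rewrite subrK.
Qed.

Lemma contraction0 Y : nbhs x Y ->
  exists W, [/\ nbhs x W, W `<=` Y & exists E, contraction W Y E (fun _ => [:: (1, pt)])].
Proof.
move=> hY; have [W [hW sWY hcyc]] := hlc hY 0.
exists W; split => //.
have /choice[E hE] : forall s, exists w : chain X 1, singular 0 W s ->
    chain_in Y w /\ chain_eq (bdry w) [:: (1, s); (-1, pt)].
  move=> s.
  have [hs|nhs] := pselect (singular 0 W s); last by exists [::] => /nhs.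
  have [||w hw] := hcyc [:: (1, s); (-1, pt)]; last by exists w.
  - apply/chain_in_cons; split=> //; apply/chain_in_cons; split; last by constructor.
    exact: singular_cst (nbhs_singleton hW).
  - by rewrite /= /augment !big_cons big_nil addr0 subrr.
exists E; split=> [s /hE[]//|s /hE[_]//|s _].
by apply/chain_eqP => M f; rewrite ev_bind ev_bdry ev_unit cob_cst ev_nil.
Qed.

Lemma contraction_succ k (W Y1 Y : set X) (E : (Delta k -> X) -> chain X k.+1)
    (C : (Delta k -> X) -> chain X k) : contraction W Y1 E C -> W `<=` Y1 ->
  (forall z : chain X k.+1, chain_in Y1 z -> chain_eq (bdry z) [::] ->
     exists w, chain_in Y w /\ chain_eq (bdry w) z) ->
  exists E', contraction W Y E' (fun s => chain_bind E (bdry [:: (1, s)])).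
Proof.
move=> [hEY hE hC] sWY1 hcyc.
(* [z s = s - E (d s)] is a cycle, since [d (z s) = C (d s)] vanishes. *)
pose z s : chain X k.+1 := (1, s) :: chain_opp (chain_bind E (bdry [:: (1, s)])).
have z_cycle s : singular k.+1 W s -> chain_eq (bdry (z s)) [::].
  move=> hs; apply/chain_eqP => M f.
  have /chain_eqP/(_ M f) := hC s hs; rewrite ev_bind ev_bdry ev_unit ev_nil => hCf.
  rewrite ev_bdry ev_cons ev_opp ev_bind ev_bdry ev_unit mulr1z /=.
  rewrite (eq_cob_in (f := fun t => ev (cob f) (E t)) (g := fun t => f t - ev f (C t)) hs).
    by rewrite (cobB f (fun t => ev f (C t))) hCf subr0 subrr.
  move=> t ht; have /chain_eqP/(_ M f) := hE t ht.
  by rewrite ev_bdry ev_cons ev_opp mulr1z.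
have /choice[E' hE'] : forall s, exists w : chain X k.+2,
    singular k.+1 W s -> chain_in Y w /\ chain_eq (bdry w) (z s).
  move=> s.
  have [hs|nhs] := pselect (singular k.+1 W s); last by exists [::] => /nhs.
  have [|w hw] := hcyc (z s) _ (z_cycle s hs); last by exists w.
  constructor; first exact: singular_sub hs.
  by apply/chain_in_opp/chain_in_bind/hEY; apply: chain_in_bdry_unit.
exists E'; split=> [s /hE'[]//|s /hE'[]//|s _].
apply/chain_eqP => M f; rewrite ev_bind ev_bdry ev_unit ev_nil.
have -> : (fun t => ev f (chain_bind E (bdry [:: (1, t)]))) = cob (fun u => ev f (E u)).
  by apply/funext => t; rewrite ev_bind ev_bdry ev_unit.
exact: cob_cob.
Qed.

Definition near_contractible k : Prop := forall Y, nbhs x Y ->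
  exists W, [/\ nbhs x W, W `<=` Y &
    exists (E : (Delta k -> X) -> chain X k.+1) C, contraction W Y E C].

Lemma near_contraction_succ n : near_contractible n -> forall Y, nbhs x Y ->
  exists W, [/\ nbhs x W, W `<=` Y & exists (E : (Delta n -> X) -> chain X n.+1) E',
    (forall s, singular n W s -> chain_in Y (E s)) /\
    contraction W Y E' (fun s => chain_bind E (bdry [:: (1, s)]))].
Proof.
move=> hn Y hY; have [Y1 [hY1 sY1Y hcyc]] := hlc hY n.+1.
have [W [hW sWY1 [E [C hEC]]]] := hn Y1 hY1.
have [E' hE'] := contraction_succ hEC sWY1 hcyc.
exists W; split => //; first exact: subset_trans sY1Y.
have [hEY1 _ _] := hEC; exists E, E'; split => // s hs.
exact: chain_in_sub sY1Y (hEY1 _ hs).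
Qed.

Lemma near_contractibleP k : near_contractible k.
Proof.
elim: k => [|n IH] Y hY.
  have [W [hW sWY [E hE]]] := contraction0 hY.
  by exists W; split => //; exists E; eexists; exact: hE.
have [W [hW sWY [E [E' [_ hE']]]]] := near_contraction_succ IH hY.
by exists W; split => //; exists E'; eexists; exact: hE'.
Qed.

Lemma cocycle0_near_constant (M : zmodType) V (f : (Delta 0 -> X) -> M) : nbhs x V ->
  (forall s, singular 1 V s -> cob f s = 0) ->
  exists W, [/\ nbhs x W, W `<=` V & forall s, singular 0 W s -> f s = f pt].
Proof.
move=> hV hf; have [W [hW sWV [E hE]]] := contraction0 hV.
exists W; split => // s hs; rewrite (contraction_cochain f hE hs) ev_unit.
by case: hE => hEV _ _; rewrite (ev_eq0_in (hEV _ hs) hf) add0r.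
Qed.

Lemma cocycle_near_coboundary (M : zmodType) n V (f : (Delta n.+1 -> X) -> M) :
  nbhs x V -> (forall s, singular n.+2 V s -> cob f s = 0) ->
  exists W, [/\ nbhs x W, W `<=` V & exists E : (Delta n -> X) -> chain X n.+1,
    (forall s, singular n W s -> chain_in V (E s)) /\
    forall s, singular n.+1 W s -> f s = cob (fun t => ev f (E t)) s].
Proof.
move=> hV hf.
have [W [hW sWV [E [E' [hEV hE']]]]] := near_contraction_succ (near_contractibleP n) hV.
exists W; split => //; exists E; split => // s hs.
have [hE'V _ _] := hE'.
by rewrite (contraction_cochain f hE' hs) (ev_eq0_in (hE'V _ hs) hf) add0r
  ev_bind ev_bdry ev_unit.
Qed.

End LocalContraction.

End SingularCochains.

(** * Sheaf-valued cochains *)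

(* [span] alone would resolve to the subspace span of [vector]. *)
Local Notation gspan := Defs.span.

Section Span.
Variables (R : comPzRingType) (M : lmodType R).

Lemma gspanP (gens : seq M) v :
  gspan gens v <-> exists r : nat -> R, v = \sum_(i < size gens) r i *: gens`_i.
Proof.
split=> [[r ->]|[r ->]]; last by exists (fun i => r i).
exists (fun n => if insub n is Some i then r i else 0).
by apply: eq_bigr => i _; rewrite valK.
Qed.

Lemma gspan0 (gens : seq M) : gspan gens 0.
Proof. by apply/gspanP; exists (fun _ => 0); rewrite big1 // => i _; rewrite scale0r. Qed.

Lemma gspanD (gens : seq M) u v : gspan gens u -> gspan gens v -> gspan gens (u + v).
Proof.
move=> /gspanP[r1 ->] /gspanP[r2 ->]; apply/gspanP; exists (fun n => r1 n + r2 n).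
by rewrite -big_split; apply: eq_bigr => i _; rewrite scalerDl.
Qed.

Lemma gspanMz (gens : seq M) u (z : int) : gspan gens u -> gspan gens (u *~ z).
Proof.
move=> /gspanP[r ->]; apply/gspanP; exists (fun n => z%:~R * r n).
by rewrite -scaler_int scaler_sumr; apply: eq_bigr => i _; rewrite scalerA.
Qed.

Lemma gspan_ev (X : topologicalType) (gens : seq M) k (W : set X)
    (f : (Delta k -> X) -> M) d :
  chain_in W d -> (forall t, singular k W t -> gspan gens (f t)) -> gspan gens (ev f d).
Proof.
move=> + hf; elim: d => [_|p d IH /chain_in_cons [hp hd]].
  by rewrite ev_nil; apply: gspan0.
by rewrite ev_cons; apply: gspanD (IH hd); apply/gspanMz/hf.
Qed.

End Span.

Section LinearImage.
Variables (R : comPzRingType) (M N : lmodType R) (h : M -> N).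
Hypothesis h_linear : linear h.

HB.instance Definition _ := GRing.isLinear.Build R M N *:%R h h_linear.

Lemma linear_cob (X : topologicalType) k (f : (Delta k -> X) -> M) s :
  h (cob f s) = cob (fun t => h (f t)) s.
Proof. by rewrite raddf_sum; apply: eq_bigr => i _; rewrite raddfMz. Qed.

Lemma gspan_linear_image (gens : seq M) v : gspan gens v -> gspan (map h gens) (h v).
Proof.
move=> /gspanP[r ->]; apply/gspanP; exists r; rewrite raddf_sum size_map.
by apply: eq_bigr => i _; rewrite /= linearZZ (nth_map 0).
Qed.

End LinearImage.

Section SheafCochains.
Variables (X : topologicalType) (R : comPzRingType) (A : sheaf X R).

Lemma cobdry_cob n U (c : cochain A n U) s : cobdry c s = cob c s.
Proof. by apply: eq_bigr => i _; rewrite -scaler_int rmorphXn rmorphN rmorph1. Qed.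

Lemma res_cobdry n (U V : set X) (c : cochain A n U) s : open U -> open V -> V `<=` U ->
  res A U V (cobdry c s) = cob (fun t => res A U V (c t)) s.
Proof. by move=> hU hV sVU; rewrite cobdry_cob linear_cob //; apply: res_linear. Qed.

Lemma germ_zero_const (U : set X) x (s : sec A U) :
  germ_zero A U x (fun _ : Delta 0 -> X => s) ->
  exists V, [/\ open V, V x, V `<=` U & res A U V s = 0].
Proof. by move=> [V [hV Vx sVU hz]]; exists V; split => //; apply: hz (singular_cst _ Vx). Qed.

Lemma germ_zero_cobdry_locally_const (U V : set X) x (c : cochain A 0 U) (s : sec A V) :
  open U -> open V -> V x -> V `<=` U ->
  (forall sigma, singular 0 V sigma -> res A U V (c sigma) = s) ->
  germ_zero A U x (cobdry c).
Proof.
move=> hU hV Vx sVU hs; exists V; split => // sigma hsig.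
rewrite res_cobdry // /cob !big_ord_recl big_ord0 /= !hs ?addr0 ?mulrN1z ?subrr //.
all: exact: singular_face.
Qed.

Lemma germ_zero_cobdry_locally_cobdry n (U V : set X) x (c : cochain A n.+1 U)
    (b : cochain A n V) : open U -> open V -> V x -> V `<=` U ->
  (forall sigma, singular n.+1 V sigma -> cobdry b sigma = res A U V (c sigma)) ->
  germ_zero A U x (cobdry c).
Proof.
move=> hU hV Vx sVU hb; exists V; split => // sigma hsig.
rewrite res_cobdry // -(cob_cob b sigma); apply: (eq_cob_in hsig) => t ht.
by rewrite -hb // cobdry_cob.
Qed.

Section LocallyContractible.
Hypothesis hlc : HLC X.

Lemma germ_cocycle0_locally_const (U : set X) x (c : cochain A 0 U) : open U ->
  germ_zero A U x (cobdry c) ->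
  exists V, [/\ open V, V x, V `<=` U & exists s : sec A V,
    forall sigma, singular 0 V sigma -> res A U V (c sigma) = s].
Proof.
move=> hU [V [hV Vx sVU hz]].
have hf s : singular 1 V s -> cob (fun t => res A U V (c t)) s = 0.
  by move=> hs; rewrite -res_cobdry ?hz.
have [W [+ sWV hconst]] := cocycle0_near_constant hlc (open_nbhs_nbhs (conj hV Vx)) hf.
rewrite nbhsE => -[W' [hW' W'x] sW'W].
have sW'V : W' `<=` V by move=> y /sW'W /sWV.
exists W'; split => //; first by move=> y /sW'V /sVU.
exists (res A V W' (res A U V (c (fun _ => x)))) => sigma hsig.
by rewrite -(hconst _ (singular_sub sW'W hsig)) res_comp.
Qed.

Lemma germ_cocycle_locally_cobdry n (U : set X) x (c : cochain A n.+1 U) : open U ->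
  fg_cochain c -> germ_zero A U x (cobdry c) ->
  exists V, [/\ open V, V x, V `<=` U & exists b : cochain A n V, fg_cochain b /\
    forall sigma, singular n.+1 V sigma -> cobdry b sigma = res A U V (c sigma)].
Proof.
move=> hU [gens hgens] [V [hV Vx sVU hz]].
pose f t := res A U V (c t).
have hf s : singular n.+2 V s -> cob f s = 0 by move=> hs; rewrite -res_cobdry ?hz.
have [W [+ sWV [E [hEV hfE]]]] :=
  cocycle_near_coboundary hlc (open_nbhs_nbhs (conj hV Vx)) hf.
rewrite nbhsE => -[W' [hW' W'x] sW'W].
have sW'V : W' `<=` V by move=> y /sW'W /sWV.
exists W'; split => //; first by move=> y /sW'V /sVU.
exists (fun t => res A V W' (ev f (E t))); split.
  exists (map (res A V W') (map (res A U V) gens)) => t ht.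
  apply: gspan_linear_image; first by apply: res_linear.
  apply: (gspan_ev (hEV _ (singular_sub sW'W ht))) => u hu.
  apply: gspan_linear_image; first by apply: res_linear.
  exact/hgens/(singular_sub sVU).
move=> sigma hsig; rewrite cobdry_cob -linear_cob; last by apply: res_linear.
rewrite -hfE; last exact: singular_sub sW'W hsig.
by rewrite /f res_comp.
Qed.

End LocallyContractible.

End SheafCochains.

Theorem lemma4p4 (X : topologicalType) (R : comPzRingType) (A : sheaf X R) :
  HLC X -> noetherian R ->
  [/\
    (forall (U : set X) (x : X) (s : sec A U), open U -> U x ->
       germ_zero A U x (fun _ : Delta 0 -> X => s) ->
       exists V : set X, [/\ open V, V x, V `<=` U & res A U V s = 0]),
    (forall (U : set X) (x : X) (c : cochain A 0 U), open U -> U x ->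
       fg_cochain c ->
       ((germ_zero A U x (cobdry c) <->
        exists V : set X, [/\ open V, V x, V `<=` U &
          exists s : sec A V, forall sigma, singular 0 V sigma ->
            res A U V (c sigma) = s]))) &
    (forall (n : nat) (U : set X) (x : X) (c : cochain A n.+1 U), open U -> U x ->
       fg_cochain c ->
       ((germ_zero A U x (cobdry c) <->
        exists V : set X, [/\ open V, V x, V `<=` U &
          exists b : cochain A n V, fg_cochain b /\
            forall sigma, singular n.+1 V sigma -> cobdry b sigma = res A U V (c sigma)])))].
Proof.
move=> hlc _; split.
- by move=> U x s _ _; apply: germ_zero_const.
- move=> U x c hU _ _; split; first exact: germ_cocycle0_locally_const.
  by move=> [V [hV Vx sVU [s hs]]]; apply: germ_zero_cobdry_locally_const hs.
- move=> n U x c hU _ hfg; split; first exact: germ_cocycle_locally_cobdry.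
  by move=> [V [hV Vx sVU [b [_ hb]]]]; apply: germ_zero_cobdry_locally_cobdry hb.
Qed.
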